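(* Let $R$ be a commutative local ring and $s\in R$. Then every upper triangular element $\left[\begin{smallmatrix} a&b\\ 0&c\end{smallmatrix}\right]$ ($a,b,c\in R$) of $M_2(R;s)$ is strongly clean in $M_2(R;s)$.
   Context: A commutative ring $R$ is local if it has a unique maximal ideal. For a commutative ring $R$ and $s\in R$, $M_2(R;s)$ denotes the ring whose elements are the $2\times 2$ arrays $\left[\begin{smallmatrix} a&b\\ c&d\end{smallmatrix}\right]$ with $a,b,c,d\in R$, with componentwise addition and multiplication $\left[\begin{smallmatrix} a&b\\ c&d\end{smallmatrix}\right]\left[\begin{smallmatrix} a'&b'\\ c'&d'\end{smallmatrix}\right]=\left[\begin{smallmatrix} aa'+s^2bc'&ab'+bd'\\ ca'+dc'&s^2cb'+dd'\end{smallmatrix}\right]$. An element $a$ of a ring $T$ is strongly clean if there is an idempotent $e\in T$ with $ae=ea$ and $a-e$ a unit of $T$. *)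

From HB Require Import structures.
From mathcomp Require Import all_boot all_order all_algebra.
Set Implicit Arguments. Unset Strict Implicit. Unset Printing Implicit Defensive.
Import GRing.Theory.
Local Open Scope ring_scope.

Definition is_ideal (R : comNzRingType) (I : R -> Prop) : Prop :=
  [/\ I 0, (forall x y, I x -> I y -> I (x + y)) & (forall r x, I x -> I (r * x))].

Definition is_maximal_ideal (R : comNzRingType) (I : R -> Prop) : Prop :=
  [/\ is_ideal I, ~ I 1 &
    forall J : R -> Prop, is_ideal J -> (forall x, I x -> J x) ->
      (forall x, J x <-> I x) \/ (forall x, J x)].

Definition local_ring (R : comNzRingType) : Prop :=
  exists I : R -> Prop, is_maximal_ideal I /\
    forall J : R -> Prop, is_maximal_ideal J -> forall x, J x <-> I x.

Record M2 (R : comNzRingType) := mkM2 { m11 : R; m12 : R; m21 : R; m22 : R }.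

Section M2ops.
Variables (R : comNzRingType) (s : R).
Definition M2add (x y : M2 R) : M2 R :=
  mkM2 (m11 x + m11 y) (m12 x + m12 y) (m21 x + m21 y) (m22 x + m22 y).
Definition M2opp (x : M2 R) : M2 R :=
  mkM2 (- m11 x) (- m12 x) (- m21 x) (- m22 x).
Definition M2sub (x y : M2 R) : M2 R := M2add x (M2opp y).
Definition M2mul (x y : M2 R) : M2 R :=
  mkM2 (m11 x * m11 y + s ^+ 2 * m12 x * m21 y)
       (m11 x * m12 y + m12 x * m22 y)
       (m21 x * m11 y + m22 x * m21 y)
       (s ^+ 2 * m21 x * m12 y + m22 x * m22 y).
Definition M2one : M2 R := mkM2 1 0 0 1.

Definition M2unit (u : M2 R) : Prop :=
  exists v : M2 R, M2mul u v = M2one /\ M2mul v u = M2one.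
Definition M2idem (e : M2 R) : Prop := M2mul e e = e.
Definition M2strongly_clean (x : M2 R) : Prop :=
  exists e : M2 R, [/\ M2idem e, M2mul x e = M2mul e x & M2unit (M2sub x e)].
End M2ops.

(* In a local ring every non-unit lies in the unique maximal ideal (Krull), so
   subtracting a unit from a non-unit always yields a unit.  An upper
   triangular [[a, b], [0, c]] of M_2(R;s) is invertible as soon as a and c
   are, since the s^2-terms of the product vanish on upper triangular elements.
   According as a and c are units or not, one of the idempotents
   0, [[0, b t], [0, 1]], [[1, b t], [0, 0]] or 1 works, where t is the
   inverse of c - a, resp. a - c; the off-diagonal entry b t is what makes the
   idempotent commute with the matrix. *)

From mathcomp Require Import all_boot all_order all_algebra.
From mathcomp Require Import ring.
From mathcomp Require Import boolp classical_sets.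
Set Implicit Arguments. Unset Strict Implicit. Unset Printing Implicit Defensive.
Import GRing.Theory.
Local Open Scope ring_scope.
Local Open Scope classical_set_scope.

Section LocalRing.
Variable R : comNzRingType.

Definition invertible (x : R) : Prop := exists y, x * y = 1.

Definition proper_ideal (I : set R) : Prop := is_ideal I /\ ~ I 1.

Definition principal_ideal (x : R) : set R := [set z | exists r, z = r * x].

Lemma idealB (I : set R) x y : is_ideal I -> I x -> I y -> I (x - y).
Proof.
move=> [_ ID IM] Ix Iy; rewrite -mulN1r.
by apply: ID => //; apply: IM.
Qed.

Lemma proper_ideal_nonunit (I : set R) x : proper_ideal I -> I x -> ~ invertible x.
Proof.
by move=> [[_ _ IM] I1] Ix [y xy]; apply: I1; rewrite -xy mulrC; apply: IM.
Qed.

Lemma principal_ideal_proper x : ~ invertible x -> proper_ideal (principal_ideal x).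
Proof.
move=> xN; split; last by move=> [r r1]; apply: xN; exists r; rewrite mulrC -r1.
split; first by exists 0; rewrite mul0r.
- by move=> _ _ [r ->] [q ->]; exists (r + q); rewrite mulrDl.
- by move=> r _ [q ->]; exists (r * q); rewrite mulrA.
Qed.

Lemma proper_ideal_bigcup (F : set (set R)) :
  F !=set0 -> F `<=` proper_ideal -> total_on F subset ->
  proper_ideal (\bigcup_(X in F) X).
Proof.
move=> [X0 FX0] Fp Ftot; split; last first.
  by move=> [X FX X1]; have [_] := Fp X FX; apply.
split; first by have [[I0 _ _] _] := Fp X0 FX0; exists X0.
- move=> x y [X FX Xx] [Y FY Yy].
  have [XY|YX] := Ftot X Y FX FY.
  + by have [[_ YD _] _] := Fp Y FY; exists Y => //; apply: YD => //; apply: XY.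
  + by have [[_ XD _] _] := Fp X FX; exists X => //; apply: XD => //; apply: YX.
- by move=> r x [X FX Xx]; have [[_ _ XM] _] := Fp X FX; exists X => //; apply: XM.
Qed.

(* [Zorn_bigcup] also asks for the union of the empty chain, [set0]; hence the
   first disjunct of [P]. *)
Lemma exists_maximal_ideal_above (J : set R) :
  proper_ideal J -> exists M, is_maximal_ideal M /\ J `<=` M.
Proof.
move=> pJ; pose P K := K = set0 \/ proper_ideal K /\ J `<=` K.
have [M [PM Mmax]] : exists M, P M /\ forall K, M `<` K -> ~ P K.
  apply: Zorn_bigcup => F FP Ftot.
  pose G := F `\ set0.
  have -> : \bigcup_(X in F) X = \bigcup_(X in G) X.
    apply/seteqP; split=> [x [X FX Xx]|x [X [FX _] Xx]]; exists X => //.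
    by split=> // X0; rewrite X0 in Xx.
  have GP X : G X -> proper_ideal X /\ J `<=` X.
    by move=> [/FP [|//] X0 /(_ X0)].
  have [[X0 GX0]|G0] := pselect (G !=set0); [right; split|left].
  + apply: proper_ideal_bigcup; first by exists X0.
    * by move=> X /GP [].
    * by move=> X Y [FX _] [FY _]; apply: Ftot.
  + by move=> x Jx; exists X0 => //; apply: (GP X0 GX0).2.
  + by apply/seteqP; split=> // x [X GX _]; apply: G0; exists X.
have [[J0 _ _] _] := pJ.
case: PM => [M0|[pM JM]].
  by exfalso; apply: (Mmax J); [rewrite M0; split=> // /(_ 0 J0) | right; split].
exists M; split=> //; have [Mideal M1] := pM; split=> // K Kideal MK.
have [K1|K1] := pselect (K 1).
  by right=> x; have [_ _ KM] := Kideal; rewrite -(mulr1 x); apply: KM.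
left; have [->|MneK] := pselect (M = K); first by [].
exfalso; apply: (Mmax K); first by split=> // KM; apply: MneK; apply/seteqP.
by right; split=> // x /JM /MK.
Qed.

Lemma local_ring_nonunit_ideal : local_ring R ->
  exists I, proper_ideal I /\ forall x, ~ invertible x -> I x.
Proof.
move=> [I [[Iideal I1 _] Iuniq]]; exists I; split=> // x xN.
have [M [Mmax xM]] := exists_maximal_ideal_above (principal_ideal_proper xN).
by apply/(Iuniq M Mmax)/xM; exists 1; rewrite mul1r.
Qed.

Lemma local_invertibleB x y : local_ring R ->
  ~ invertible x -> invertible y -> invertible (x - y).
Proof.
move=> /local_ring_nonunit_ideal [I [pI Inonunit]] xN yU.
have [v|xyN] := pselect (invertible (x - y)); first by [].
exfalso; apply: (proper_ideal_nonunit pI _ yU).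
have -> : y = x - (x - y) by ring.
by apply: idealB; [case: pI | apply: Inonunit | apply: Inonunit].
Qed.

End LocalRing.

Section UpperTriangular.
Variables (R : comNzRingType) (s : R).

Lemma M2mul_ut (a b c a' b' c' : R) :
  M2mul s (mkM2 a b 0 c) (mkM2 a' b' 0 c') =
  mkM2 (a * a') (a * b' + b * c') 0 (c * c').
Proof. by rewrite /M2mul /=; congr mkM2; ring. Qed.

Lemma M2sub_ut (a b c a' b' c' : R) :
  M2sub (mkM2 a b 0 c) (mkM2 a' b' 0 c') = mkM2 (a - a') (b - b') 0 (c - c').
Proof. by rewrite /M2sub /M2add /M2opp /= oppr0 addr0. Qed.

Lemma M2unit_ut (a b c : R) :
  invertible a -> invertible c -> M2unit s (mkM2 a b 0 c).
Proof.
move=> [a' aa'] [c' cc']; exists (mkM2 a' (- (a' * b * c')) 0 c').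
rewrite !M2mul_ut /M2one; split; congr mkM2;
  rewrite // ?[a' * a]mulrC ?[c' * c]mulrC //.
- by rewrite mulrN !mulrA aa' mul1r addNr.
- by rewrite mulNr -!mulrA [c' * c]mulrC cc' mulr1 subrr.
Qed.

Lemma ut_strongly_clean (a b c ea eb ec : R) :
  ea * ea = ea -> ec * ec = ec -> ea * eb + eb * ec = eb ->
  a * eb + b * ec = ea * b + eb * c ->
  invertible (a - ea) -> invertible (c - ec) ->
  M2strongly_clean s (mkM2 a b 0 c).
Proof.
move=> eaI ecI ebI comm uA uC; exists (mkM2 ea eb 0 ec); split.
- by rewrite /M2idem M2mul_ut eaI ecI ebI.
- by rewrite !M2mul_ut comm; congr mkM2; apply: mulrC.
- by rewrite M2sub_ut; apply: M2unit_ut.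
Qed.

End UpperTriangular.

Theorem lemma3p5 (R : comNzRingType) (s : R) (hR : local_ring R) (a b c : R) :
  M2strongly_clean s (mkM2 a b 0 c).
Proof.
have U1 : invertible (1 : R) by exists 1; rewrite mulr1.
have [aU|aN] := pselect (invertible a); have [cU|cN] := pselect (invertible c).
- by apply: (@ut_strongly_clean _ s a b c 0 0 0); rewrite ?subr0 //; ring.
- have [t ht] := local_invertibleB hR cN aU.
  apply: (@ut_strongly_clean _ s a b c 0 (b * t) 1); rewrite ?subr0 //; try ring.
  + by rewrite -ht; ring.
  + exact: local_invertibleB.
- have [t ht] := local_invertibleB hR aN cU.
  apply: (@ut_strongly_clean _ s a b c 1 (b * t) 0); rewrite ?subr0 //; try ring.
  + by rewrite -ht; ring.
  + exact: local_invertibleB.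
- apply: (@ut_strongly_clean _ s a b c 1 0 1); try ring;
    exact: local_invertibleB.
Qed.
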